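(* The orbits of the action $\rho(P,A) = P^T A P$ of $\operatorname{Sp}(4)$ on $S(4,\mathbb{R})$ are exactly the following pairwise distinct sets: (i) for each $p > 0$, $\mathcal{J}_p^{+} = \{\sqrt{p}\,J\}$; (ii) for each $p > 0$, $\mathcal{J}_p^{-} = \{-\sqrt{p}\,J\}$; (iii) for each $p > 0$ and $q \in \mathbb{R}$, $\mathcal{A}_{p,q}^{+} = \{A \in S(4,\mathbb{R}) : A \neq \pm\sqrt{p}\,J,\ \operatorname{Pf}(A) = p,\ \operatorname{s}(A) = q\}$; (iv) for each $p < 0$ and $q \in \mathbb{R}$, $\mathcal{A}_{p,q}^{-} = \{A \in S(4,\mathbb{R}) : \operatorname{Pf}(A) = p,\ \operatorname{s}(A) = q\}$.
   Context: $S(4,\mathbb{R}) = \{A \in M(4,\mathbb{R}) : A^T = -A,\ \det A \neq 0\}$. $J = \operatorname{diag}(J_0,J_0)$ with $J_0 = \begin{bmatrix} 0 & 1 \\ -1 & 0\end{bmatrix}$, and $\operatorname{Sp}(4) = \{P \in M(4,\mathbb{R}) : P^T J P = J\}$. For $A = \begin{bmatrix} 0 & a & b & c \\ -a & 0 & d & e \\ -b & -d & 0 & f \\ -c & -e & -f & 0\end{bmatrix}$, $\operatorname{Pf}(A) = af - be + cd$ and $\operatorname{s}(A) = a + f$. *)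

From HB Require Import structures.
From mathcomp Require Import all_boot all_order all_algebra.
From mathcomp Require Import reals.
Set Implicit Arguments. Unset Strict Implicit. Unset Printing Implicit Defensive.
Import Order.TTheory GRing.Theory Num.Theory.
Local Open Scope ring_scope.

Section Defs.
Variable R : realType.

Definition i4 (k : nat) : 'I_4 := inord k.

Definition S4 (A : 'M[R]_4) : Prop := A^T = - A /\ \det A != 0.

(* J = diag(J0, J0), J0 = [[0,1],[-1,0]] *)
Definition Jmat : 'M[R]_4 :=
  \matrix_(i < 4, j < 4)
    if ((i == 0 :> nat) && (j == 1 :> nat)) || ((i == 2 :> nat) && (j == 3 :> nat)) then 1
    else if ((i == 1 :> nat) && (j == 0 :> nat)) || ((i == 3 :> nat) && (j == 2 :> nat)) then -1
    else 0.

Definition Sp4 (P : 'M[R]_4) : Prop := P^T *m Jmat *m P = Jmat.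

(* a = A01, b = A02, c = A03, d = A12, e = A13, f = A23 *)
Definition Pf (A : 'M[R]_4) : R :=
  A (i4 0) (i4 1) * A (i4 2) (i4 3) - A (i4 0) (i4 2) * A (i4 1) (i4 3)
  + A (i4 0) (i4 3) * A (i4 1) (i4 2).

Definition sfun (A : 'M[R]_4) : R := A (i4 0) (i4 1) + A (i4 2) (i4 3).

Definition sp_orbit (A : 'M[R]_4) : 'M[R]_4 -> Prop :=
  fun B => exists P, Sp4 P /\ B = P^T *m A *m P.

Inductive label :=
  | LJplus of R
  | LJminus of R
  | LAplus of R & R
  | LAminus of R & R.

Definition valid_label (l : label) : Prop :=
  match l with
  | LJplus p => 0 < p
  | LJminus p => 0 < p
  | LAplus p _ => 0 < p
  | LAminus p _ => p < 0
  end.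

Definition label_set (l : label) : 'M[R]_4 -> Prop :=
  match l with
  | LJplus p => fun A => A = Num.sqrt p *: Jmat
  | LJminus p => fun A => A = - (Num.sqrt p *: Jmat)
  | LAplus p q => fun A => S4 A /\ A <> Num.sqrt p *: Jmat
                   /\ A <> - (Num.sqrt p *: Jmat) /\ Pf A = p /\ sfun A = q
  | LAminus p q => fun A => S4 A /\ Pf A = p /\ sfun A = q
  end.

End Defs.

(* Pf and s are invariants of the action: for P symplectic, (P^T A P) J is
   conjugate to A J by P^T, and A J is annihilated by X^2 + s(A) X + Pf(A);
   comparing traces gives s, and then the quadratic relations give Pf.
   Multiples x J are fixed points of the action.  For any other A the operator
   N = J^-1 A - s(A)/2 is self-adjoint for the symplectic form, satisfies
   N^2 = s(A)^2/4 - Pf(A), and is not scalar; this yields vectors u, w with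
   omega(u, w) = 0 and omega(N u, w) = 1, and the symplectic basis (u, N w, N u, w)
   brings A to a normal form depending only on Pf(A) and s(A).  So the other
   orbits are the level sets of (Pf, s) away from the multiples of J, which
   have Pf(x J) = x^2 > 0; this is the list (iii)-(iv). *)
From HB Require Import structures.
From mathcomp Require Import all_boot all_order all_algebra.
From mathcomp Require Import reals.
From mathcomp Require Import ring lra.
From Stdlib Require Import FunctionalExtensionality PropExtensionality.
Import Order.TTheory GRing.Theory Num.Theory.
Local Open Scope ring_scope.

Set Implicit Arguments. Unset Strict Implicit. Unset Printing Implicit Defensive.

Lemma predext (T : Type) (P Q : T -> Prop) : (forall x, P x <-> Q x) -> P = Q.
Proof.
by move=> PQ; apply: functional_extensionality => x; apply: propositional_extensionality.
Qed.

Section Symplectic.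
Variables (R : comUnitRingType) (n : nat) (J : 'M[R]_n).
Hypothesis J_sqr : J *m J = - 1%:M.

Lemma sympl_mulmx_inv (P : 'M[R]_n) :
  P^T *m J *m P = J -> - (J *m P^T *m J) *m P = 1%:M.
Proof. by move=> HP; rewrite mulNmx -!mulmxA (mulmxA P^T) HP J_sqr opprK. Qed.

Lemma sympl_unitmx (P : 'M[R]_n) : P^T *m J *m P = J -> P \in unitmx.
Proof. by move=> /sympl_mulmx_inv /mulmx1_unit []. Qed.

Lemma sympl_trmx (P : 'M[R]_n) : P^T *m J *m P = J -> P *m J *m P^T = J.
Proof.
move=> HP; have /mulmx1C HPL := sympl_mulmx_inv HP.
have E : - (J *m P^T *m J) *m J = J *m P^T.
  by rewrite mulNmx -!mulmxA J_sqr !mulmxN mulmx1 opprK.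
by rewrite -[RHS]mul1mx -HPL -[RHS]mulmxA E mulmxA.
Qed.

End Symplectic.

Lemma congr_mulmx (R : comPzRingType) (n : nat) (P Q A : 'M[R]_n) :
  (P *m Q)^T *m A *m (P *m Q) = Q^T *m (P^T *m A *m P) *m Q.
Proof. by rewrite trmx_mul !mulmxA. Qed.

Lemma congr_mulmx_inv (R : comPzRingType) (n : nat) (P Q A : 'M[R]_n) :
  P *m Q = 1%:M -> Q^T *m (P^T *m A *m P) *m Q = A.
Proof. by move=> HPQ; rewrite -congr_mulmx HPQ trmx1 mul1mx mulmx1. Qed.

Lemma congr_skew (R : comPzRingType) (n : nat) (P A : 'M[R]_n) :
  A^T = - A -> (P^T *m A *m P)^T = - (P^T *m A *m P).
Proof. by move=> HA; rewrite !trmx_mul trmxK HA mulNmx mulmxN mulmxA. Qed.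

Section Sp4Orbits.
Variable R : realType.
Local Notation M := 'M[R]_4.
Local Notation J := (Jmat R).

Lemma i4K k : (k < 4)%N -> i4 k = k :> nat.
Proof. by move=> hk; rewrite /i4 inordK. Qed.

Lemma ord4_i4 (i : 'I_4) : i = i4 i.
Proof. by apply/val_inj; rewrite /= i4K. Qed.

Lemma mx4P (X Y : M) :
  (forall k l, (k < 4)%N -> (l < 4)%N -> X (i4 k) (i4 l) = Y (i4 k) (i4 l)) -> X = Y.
Proof. by move=> XY; apply/matrixP => i j; rewrite (ord4_i4 i) (ord4_i4 j) XY. Qed.

Definition mx4 (F : nat -> nat -> R) : M := \matrix_(i, j) F i j.

Lemma mx4E F k l : (k < 4)%N -> (l < 4)%N -> mx4 F (i4 k) (i4 l) = F k l.
Proof. by move=> hk hl; rewrite mxE !i4K. Qed.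

Lemma sum4 (F : 'I_4 -> R) :
  \sum_(i < 4) F i = F (i4 0) + F (i4 1) + F (i4 2) + F (i4 3).
Proof.
rewrite !big_ord_recr big_ord0 /= add0r.
by congr (_ + _ + _ + _); congr F; apply/val_inj; rewrite /= i4K.
Qed.

Lemma mulmx4E (X Y : M) k l : (X *m Y) (i4 k) (i4 l) =
    X (i4 k) (i4 0) * Y (i4 0) (i4 l) + X (i4 k) (i4 1) * Y (i4 1) (i4 l)
  + X (i4 k) (i4 2) * Y (i4 2) (i4 l) + X (i4 k) (i4 3) * Y (i4 3) (i4 l).
Proof. by rewrite mxE sum4. Qed.

Lemma scalar_mx4E (x : R) k l : (k < 4)%N -> (l < 4)%N ->
  (x%:M : M) (i4 k) (i4 l) = x *+ (k == l).
Proof. by move=> hk hl; rewrite mxE -val_eqE /= !i4K. Qed.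

(* [mxE] must come last: tried first, it would unfold [mx4] and [*m] entries
   into terms indexed by [i4 k] that no longer compute. *)
Definition entry4E := (mulmx4E, scalar_mx4E, mx4E, mxE).

Ltac entrywise :=
  apply: mx4P => -[|[|[|[|?]]]] -[|[|[|[|?]]]] // _ _; rewrite ?entry4E //=.

Definition skew4 (a b c d e f : R) : M := mx4 (fun i j =>
  match i, j with
  | 0, 1 => a | 0, 2 => b | 0, 3 => c | 1, 2 => d | 1, 3 => e | 2, 3 => f
  | 1, 0 => - a | 2, 0 => - b | 3, 0 => - c | 2, 1 => - d | 3, 1 => - e
  | 3, 2 => - f | _, _ => 0
  end).

Lemma Jmat_skew4 : J = skew4 1 0 0 0 0 1.
Proof. by entrywise; rewrite !i4K //= ?oppr0. Qed.

Lemma scale_Jmat (x : R) : x *: J = skew4 x 0 0 0 0 x.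
Proof. by rewrite Jmat_skew4; entrywise; ring. Qed.

Lemma trmx_skew4 (a b c d e f : R) : (skew4 a b c d e f)^T = - skew4 a b c d e f.
Proof. by entrywise; rewrite ?oppr0 ?opprK. Qed.

Lemma skew4_entries (A : M) : A^T = - A ->
  A = skew4 (A (i4 0) (i4 1)) (A (i4 0) (i4 2)) (A (i4 0) (i4 3))
            (A (i4 1) (i4 2)) (A (i4 1) (i4 3)) (A (i4 2) (i4 3)).
Proof.
move=> HA; have Aswap k l : A (i4 l) (i4 k) = - A (i4 k) (i4 l).
  by have := congr1 (fun X : M => X (i4 k) (i4 l)) HA; rewrite !mxE.
have Adiag k : A (i4 k) (i4 k) = 0 by have := Aswap k k; lra.
by entrywise; rewrite ?Adiag // Aswap.
Qed.

Lemma Pf_skew4 (a b c d e f : R) : Pf (skew4 a b c d e f) = a * f - b * e + c * d.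
Proof. by rewrite /Pf !mx4E. Qed.

Lemma sfun_skew4 (a b c d e f : R) : sfun (skew4 a b c d e f) = a + f.
Proof. by rewrite /sfun !mx4E. Qed.

Lemma Jmat_sqr : J *m J = - 1%:M.
Proof. by rewrite Jmat_skew4; entrywise; ring. Qed.

Lemma skew4_mul_dual (a b c d e f : R) :
  skew4 a b c d e f *m skew4 f (- e) d c (- b) a = - (a * f - b * e + c * d) *: 1%:M.
Proof. by entrywise; ring. Qed.

Lemma unitmx_skew4 (a b c d e f : R) :
  (skew4 a b c d e f \in unitmx) = (a * f - b * e + c * d != 0).
Proof.
apply/idP/idP => [Au | pf_neq0].
  apply/eqP => pf0.
  have dual0 : skew4 f (- e) d c (- b) a = 0.
    by rewrite -(mulKmx Au (skew4 _ _ _ _ _ _)) skew4_mul_dual pf0 oppr0 scale0r mulmx0.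
  have A0 : skew4 a b c d e f = 0.
    have entry0 k l : skew4 f (- e) d c (- b) a (i4 k) (i4 l) = 0 by rewrite dual0 mxE.
    move: (entry0 0 1) (entry0 0 2) (entry0 0 3) (entry0 1 2) (entry0 1 3) (entry0 2 3).
    by rewrite !mx4E //= => f0 e0 d0 c0 b0 a0; entrywise; lra.
  by move: Au; rewrite A0 unitmxE det0 unitr0.
have /mulmx1_unit [] // : skew4 a b c d e f *m
    ((- (a * f - b * e + c * d))^-1 *: skew4 f (- e) d c (- b) a) = 1%:M.
by rewrite -scalemxAr skew4_mul_dual scalerA mulVf ?scale1r // oppr_eq0.
Qed.

Lemma S4_skew4 (a b c d e f : R) :
  S4 (skew4 a b c d e f) <-> a * f - b * e + c * d != 0.
Proof.
rewrite /S4 -unitfE -unitmxE unitmx_skew4 trmx_skew4.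
by split => [[]|].
Qed.

Lemma S4_Pf (A : M) : A^T = - A -> S4 A <-> Pf A != 0.
Proof. by move=> HA; rewrite (skew4_entries HA) Pf_skew4; exact: S4_skew4. Qed.

(* The characteristic polynomial of [A J] is the square of this quadratic. *)
Lemma skew4_mulJ_quadratic (a b c d e f : R) :
  let X := skew4 a b c d e f *m J in
  X *m X + (a + f) *: X + (a * f - b * e + c * d) *: 1%:M = 0.
Proof. by rewrite /= Jmat_skew4; entrywise; ring. Qed.

Lemma skew_mulJ_quadratic (A : M) : A^T = - A ->
  A *m J *m (A *m J) + sfun A *: (A *m J) + Pf A *: 1%:M = 0.
Proof.
by move=> HA; rewrite (skew4_entries HA) Pf_skew4 sfun_skew4; exact: skew4_mulJ_quadratic.
Qed.

Lemma mxtrace_skew_mulJ (A : M) : A^T = - A -> \tr (A *m J) = - (sfun A *+ 2).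
Proof.
move=> HA; rewrite (skew4_entries HA) sfun_skew4 Jmat_skew4 /mxtrace sum4.
by rewrite !entry4E //=; ring.
Qed.

Lemma sympl_congr_mulJ (P A : M) : Sp4 P ->
  P^T *m A *m P *m J *m P^T = P^T *m (A *m J).
Proof. by move=> HP; rewrite -!mulmxA (mulmxA P) (sympl_trmx Jmat_sqr HP). Qed.

Lemma sympl_congr_invariants (P A : M) : Sp4 P -> A^T = - A ->
  sfun (P^T *m A *m P) = sfun A /\ Pf (P^T *m A *m P) = Pf A.
Proof.
move=> HP HA; have HB := congr_skew P HA; set B := P^T *m A *m P in HB *.
have Gu : P^T \in unitmx by rewrite unitmx_tr (sympl_unitmx Jmat_sqr HP).
have BJ : B *m J = P^T *m (A *m J) *m invmx P^T.
  by rewrite -(sympl_congr_mulJ _ HP) mulmxK.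
have sB : sfun B = sfun A.
  have : \tr (B *m J) = \tr (A *m J).
    by rewrite BJ mxtrace_mulC mulKmx.
  by rewrite !mxtrace_skew_mulJ //; lra.
split => //.
have qA : B *m J *m (B *m J) + sfun A *: (B *m J) + Pf A *: 1%:M = 0.
  suff -> : B *m J *m (B *m J) + sfun A *: (B *m J) + Pf A *: 1%:M
      = P^T *m (A *m J *m (A *m J) + sfun A *: (A *m J) + Pf A *: 1%:M) *m invmx P^T.
    by rewrite skew_mulJ_quadratic // mulmx0 mul0mx.
  rewrite BJ !mulmxDr !mulmxDl !mulmxA (mulmxKV Gu) -!scalemxAr -!scalemxAl.
  by rewrite !mulmxA mulmx1 (mulmxV Gu).
have := skew_mulJ_quadratic HB; rewrite sB => qB.
have : Pf B *: (1%:M : M) = Pf A *: 1%:M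
  by apply: (addrI (B *m J *m (B *m J) + sfun A *: (B *m J))); rewrite qB qA.
by move/(congr1 (fun X : M => X (i4 0) (i4 0))); rewrite !entry4E //= !mulr1.
Qed.

Definition J_multiple (A : M) : bool := A == A (i4 0) (i4 1) *: J.

Lemma J_multipleP (A : M) : reflect (exists x, A = x *: J) (J_multiple A).
Proof.
apply: (iffP eqP) => [-> | [x ->]]; first by eexists.
by rewrite [in X in _ = X *: _]scale_Jmat mx4E.
Qed.

Definition normal_form (p q : R) : M := skew4 (q / 2) 0 1 (p - (q / 2) ^+ 2) 0 (q / 2).

Definition sform (u v : nat -> R) : R :=
  u 0%N * v 1%N - u 1%N * v 0%N + u 2%N * v 3%N - u 3%N * v 2%N.

Section NormalForm.
Variables a b c d e f : R.
Local Notation A := (skew4 a b c d e f).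
Local Notation pf := (a * f - b * e + c * d).
Local Notation h := ((a + f) / 2).
Local Notation D := (h ^+ 2 - pf).

Definition skew4_mulv (v : nat -> R) (i : nat) : R :=
  match i with
  | 0 => a * v 1%N + b * v 2%N + c * v 3%N
  | 1 => - a * v 0%N + d * v 2%N + e * v 3%N
  | 2 => - b * v 0%N - d * v 1%N + f * v 3%N
  | _ => - c * v 0%N - e * v 1%N - f * v 2%N
  end.

(* [sform u v] is [u^T J v] and [Nvec] is [N = J^-1 A - h]. Since [N] is
   self-adjoint for [sform] with [N^2 = D], the basis [(u, N w, N u, w)] has
   the Gram matrices below. *)
Definition Nvec (v : nat -> R) (i : nat) : R :=
  match i with
  | 0 => - skew4_mulv v 1 | 1 => skew4_mulv v 0
  | 2 => - skew4_mulv v 3 | _ => skew4_mulv v 2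
  end - h * v i.

Definition basis_mx (u w : nat -> R) : M := mx4 (fun i j =>
  match j with 0 => u i | 1 => Nvec w i | 2 => Nvec u i | _ => w i end).

Lemma basis_mx_gram (u w : nat -> R) :
  let W1 := sform u w in let W2 := sform (Nvec u) w in
  (basis_mx u w)^T *m J *m basis_mx u w = skew4 W2 0 W1 (- D * W1) 0 W2.
Proof.
move=> W1 W2; rewrite /W1 /W2 Jmat_skew4.
entrywise; rewrite /Nvec /skew4_mulv /sform.
all: by field.
Qed.

Lemma basis_mx_congr (u w : nat -> R) :
  let W1 := sform u w in let W2 := sform (Nvec u) w in
  (basis_mx u w)^T *m A *m basis_mx u w =
    skew4 (h * W2 + D * W1) 0 (h * W1 + W2) (- h * D * W1 - D * W2) 0 (h * W2 + D * W1).
Proof.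
move=> W1 W2; rewrite /W1 /W2.
entrywise; rewrite /Nvec /skew4_mulv /sform.
all: by field.
Qed.

Lemma adapted_basis_normal_form (u w : nat -> R) :
  sform u w = 0 -> sform (Nvec u) w = 1 ->
  Sp4 (basis_mx u w) /\ (basis_mx u w)^T *m A *m basis_mx u w = normal_form pf (a + f).
Proof.
move=> W1 W2; rewrite /Sp4 basis_mx_gram basis_mx_congr W1 W2 Jmat_skew4 /normal_form.
by split; congr skew4; field.
Qed.

Lemma exists_adapted_pair : ~~ J_multiple A ->
  exists u w, sform u w = 0 /\ sform (Nvec u) w = 1.
Proof.
move=> notJ.
have [bc0|bc_neq0] := eqVneq (b ^+ 2 + c ^+ 2) 0; last first.
  exists (fun i => if i is 0 then 1 else 0).
  exists (fun i => match i with 2 => b / (b ^+ 2 + c ^+ 2) | 3 => c / (b ^+ 2 + c ^+ 2) | _ => 0 end).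
  by rewrite /sform /Nvec /skew4_mulv /=; split; [ring | field].
have b0 : b = 0 by nra.
have c0 : c = 0 by nra.
have [de0|de_neq0] := eqVneq (d ^+ 2 + e ^+ 2) 0; last first.
  exists (fun i => if i is 1 then 1 else 0).
  exists (fun i => match i with 2 => d / (d ^+ 2 + e ^+ 2) | 3 => e / (d ^+ 2 + e ^+ 2) | _ => 0 end).
  by rewrite /sform /Nvec /skew4_mulv /= b0 c0; split; [ring | field].
have d0 : d = 0 by nra.
have e0 : e = 0 by nra.
have af_neq0 : a - f != 0.
  apply: contra notJ; rewrite subr_eq0 => /eqP af.
  by apply/J_multipleP; exists a; rewrite scale_Jmat b0 c0 d0 e0 af.
exists (fun i => if i is (0 | 2) then 1 else 0).
exists (fun i => match i with 1 => (a - f)^-1 | 3 => - (a - f)^-1 | _ => 0 end).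
by rewrite /sform /Nvec /skew4_mulv /= b0 c0 d0 e0; split; [ring | field].
Qed.

End NormalForm.

Lemma sympl_normal_form (A : M) : A^T = - A -> ~~ J_multiple A ->
  exists Q, Sp4 Q /\ Q^T *m A *m Q = normal_form (Pf A) (sfun A).
Proof.
move=> HA; rewrite (skew4_entries HA) Pf_skew4 sfun_skew4.
move=> /exists_adapted_pair [u [w [uw Nuw]]].
by eexists; exact: adapted_basis_normal_form uw Nuw.
Qed.

Lemma Pf_scale_Jmat (x : R) : Pf (x *: J) = x ^+ 2.
Proof. by rewrite scale_Jmat Pf_skew4; ring. Qed.

Lemma S4_scale_Jmat (x : R) : S4 (x *: J) <-> x != 0.
Proof. by rewrite scale_Jmat S4_skew4 mulr0 subr0 addr0 mulf_eq0 orbb. Qed.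

Lemma scale_Jmat_entry01 (x : R) : (x *: J) (i4 0) (i4 1) = x.
Proof. by rewrite scale_Jmat mx4E. Qed.

Lemma Pf_normal_form (p q : R) : Pf (normal_form p q) = p.
Proof. by rewrite Pf_skew4; ring. Qed.

Lemma sfun_normal_form (p q : R) : sfun (normal_form p q) = q.
Proof. by rewrite sfun_skew4; field. Qed.

Lemma S4_normal_form (p q : R) : S4 (normal_form p q) <-> p != 0.
Proof. by rewrite /normal_form S4_skew4 -Pf_skew4 Pf_normal_form. Qed.

Lemma normal_form_not_J_multiple (p q : R) : ~~ J_multiple (normal_form p q).
Proof.
apply/J_multipleP => -[x /(congr1 (fun X : M => X (i4 0) (i4 3)))].
by rewrite scale_Jmat !mx4E //; apply/eqP; rewrite oner_eq0.
Qed.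

Lemma sp_orbit_refl (A : M) : sp_orbit A A.
Proof.
exists 1%:M; rewrite trmx1 mul1mx mulmx1; split => //.
by rewrite /Sp4 trmx1 mul1mx mulmx1.
Qed.

Lemma sp_orbit_sym (A B : M) : sp_orbit A B -> sp_orbit B A.
Proof.
case=> P [HP ->]; have /mulmx1C HPQ := sympl_mulmx_inv Jmat_sqr HP.
exists (- (J *m P^T *m J)); split; last by rewrite congr_mulmx_inv.
by have := congr_mulmx_inv J HPQ; rewrite HP.
Qed.

Lemma sp_orbit_trans (A B C : M) : sp_orbit A B -> sp_orbit B C -> sp_orbit A C.
Proof.
case=> P [HP ->] [Q [HQ ->]]; exists (P *m Q).
by rewrite /Sp4 !congr_mulmx HP HQ.
Qed.

Lemma sp_orbit_scale_Jmat (x : R) (B : M) : sp_orbit (x *: J) B <-> B = x *: J.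
Proof.
split => [[P [HP ->]] | ->]; last exact: sp_orbit_refl.
by rewrite -scalemxAr -scalemxAl HP.
Qed.

Lemma J_multiple_sp_orbit (A B : M) : sp_orbit A B -> J_multiple B = J_multiple A.
Proof.
suff JA_JB C D : sp_orbit C D -> J_multiple C -> J_multiple D.
  by move=> AB; apply/idP/idP; apply: JA_JB => //; exact: sp_orbit_sym.
move=> CD /J_multipleP [x Cx]; move: CD; rewrite Cx sp_orbit_scale_Jmat => ->.
by apply/J_multipleP; exists x.
Qed.

Lemma sp_orbit_normal_form (A : M) : A^T = - A -> ~~ J_multiple A ->
  sp_orbit A (normal_form (Pf A) (sfun A)).
Proof. by move=> HA /(sympl_normal_form HA) [Q [HQ <-]]; exists Q. Qed.

Lemma sp_orbitP (A B : M) : S4 A -> ~~ J_multiple A ->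
  sp_orbit A B <-> [/\ S4 B, ~~ J_multiple B, Pf B = Pf A & sfun B = sfun A].
Proof.
move=> SA notJA; have HA := proj1 SA; split => [AB | [SB notJB pfB sB]].
  have [P [HP EB]] := AB.
  have HB : B^T = - B by rewrite EB congr_skew.
  have [sB pfB] := sympl_congr_invariants HP HA; rewrite -EB in sB pfB.
  split => //; last by rewrite (J_multiple_sp_orbit AB).
  by apply/(S4_Pf HB); rewrite pfB; apply/(S4_Pf HA).
apply: sp_orbit_trans (sp_orbit_normal_form HA notJA) _.
by rewrite -pfB -sB; apply/sp_orbit_sym/sp_orbit_normal_form => //; case: SB.
Qed.

Lemma label_set_LAplus (p q : R) (B : M) : 0 < p ->
  label_set (LAplus p q) B <-> [/\ S4 B, ~~ J_multiple B, Pf B = p & sfun B = q].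
Proof.
move=> p_gt0 /=; split => [[SB [Bp [Bm [pfB sB]]]] | [SB notJB pfB sB]].
  split => //; apply/J_multipleP => -[x Bx].
  have /eqP : x ^+ 2 = Num.sqrt p ^+ 2 by rewrite -Pf_scale_Jmat -Bx pfB sqr_sqrtr // ltW.
  rewrite eqf_sqr => /orP [] /eqP x_eq; [apply: Bp | apply: Bm].
    by rewrite Bx x_eq.
  by rewrite Bx x_eq scaleNr.
have notJ x : B <> x *: J by move=> Bx; move/J_multipleP: notJB; apply; exists x.
by split => //; split; [exact: notJ | rewrite -scaleNr; split; [exact: notJ | by []]].
Qed.

Lemma label_set_LAminus (p q : R) (B : M) : p < 0 ->
  label_set (LAminus p q) B <-> [/\ S4 B, ~~ J_multiple B, Pf B = p & sfun B = q].
Proof.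
move=> p_lt0 /=; split => [[SB [pfB sB]] | [SB _ pfB sB] //].
split => //; apply/J_multipleP => -[x Bx].
by move: pfB; rewrite Bx Pf_scale_Jmat => x2; have := sqr_ge0 x; lra.
Qed.

Definition orbit_label (A : M) : label R :=
  if J_multiple A then
    let x := A (i4 0) (i4 1) in if 0 < x then LJplus (x ^+ 2) else LJminus (x ^+ 2)
  else if 0 < Pf A then LAplus (Pf A) (sfun A) else LAminus (Pf A) (sfun A).

Lemma sp_orbit_label (A : M) : S4 A ->
  valid_label (orbit_label A) /\ sp_orbit A = label_set (orbit_label A).
Proof.
move=> SA; rewrite /orbit_label; have [/J_multipleP [x Ax] | notJA] := boolP (J_multiple A).
  have x_neq0 : x != 0 by rewrite -S4_scale_Jmat -Ax.
  rewrite Ax scale_Jmat_entry01.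
  have [x_lt0 | x_gt0 | x0] := ltrgtP x 0; last by rewrite x0 eqxx in x_neq0.
    split; first by rewrite /=; nra.
    by apply: predext => B; rewrite sp_orbit_scale_Jmat /= sqrtr_sqr ltr0_norm // scaleNr opprK.
  split; first by rewrite /=; nra.
  by apply: predext => B; rewrite sp_orbit_scale_Jmat /= sqrtr_sqr gtr0_norm.
have pf_neq0 : Pf A != 0 by apply/(S4_Pf (proj1 SA)).
have [pf_lt0 | pf_gt0 | pf0] := ltrgtP (Pf A) 0; last by rewrite pf0 eqxx in pf_neq0.
  split => //; apply: predext => B.
  by rewrite sp_orbitP // label_set_LAminus.
split => //; apply: predext => B.
by rewrite sp_orbitP // label_set_LAplus.
Qed.

Lemma orbit_label_sp_orbit (A B : M) : S4 A -> sp_orbit A B ->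
  orbit_label B = orbit_label A.
Proof.
move=> SA AB; have [JA | notJA] := boolP (J_multiple A).
  by move/J_multipleP: JA AB => [x ->] /sp_orbit_scale_Jmat ->.
have [_ notJB pfB sB] := (sp_orbitP B SA notJA).1 AB.
by rewrite /orbit_label (negbTE notJA) (negbTE notJB) pfB sB.
Qed.

Definition label_rep (l : label R) : M :=
  match l with
  | LJplus p => Num.sqrt p *: J
  | LJminus p => (- Num.sqrt p) *: J
  | LAplus p q | LAminus p q => normal_form p q
  end.

Lemma S4_label_rep (l : label R) : valid_label l -> S4 (label_rep l).
Proof.
case: l => [p|p|p q|p q] /= hp.
- by rewrite S4_scale_Jmat gt_eqF // sqrtr_gt0.
- by rewrite S4_scale_Jmat oppr_eq0 gt_eqF // sqrtr_gt0.
- by rewrite S4_normal_form gt_eqF.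
- by rewrite S4_normal_form lt_eqF.
Qed.

Lemma orbit_label_rep (l : label R) : valid_label l -> orbit_label (label_rep l) = l.
Proof.
have J_scale x : J_multiple (x *: J) by apply/J_multipleP; exists x.
rewrite /orbit_label; case: l => [p|p|p q|p q] /= hp.
- by rewrite J_scale scale_Jmat_entry01 sqrtr_gt0 hp sqr_sqrtr // ltW.
- rewrite J_scale scale_Jmat_entry01 oppr_gt0 lt_gtF ?sqrtr_gt0 //.
  by rewrite sqrrN sqr_sqrtr // ltW.
- by rewrite (negbTE (normal_form_not_J_multiple _ _)) Pf_normal_form sfun_normal_form hp.
- by rewrite (negbTE (normal_form_not_J_multiple _ _)) Pf_normal_form sfun_normal_form lt_gtF.
Qed.

Lemma label_set_sp_orbit (l : label R) : valid_label l -> label_set l = sp_orbit (label_rep l).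
Proof.
by move=> vl; rewrite (proj2 (sp_orbit_label (S4_label_rep vl))) orbit_label_rep.
Qed.

End Sp4Orbits.

Theorem theorem2p2 (R : realType) :
  (forall O : 'M[R]_4 -> Prop,
      (exists A, S4 A /\ O = sp_orbit A) <->
      (exists l : label R, valid_label l /\ O = label_set l))
  /\ (forall l1 l2 : label R, valid_label l1 -> valid_label l2 ->
        label_set l1 = label_set l2 -> l1 = l2).
Proof.
split=> [O | l1 l2 v1 v2 E]; first split.
- by case=> A [SA ->]; exists (orbit_label A); exact: sp_orbit_label.
- case=> l [vl ->]; exists (label_rep l).
  by split; [exact: S4_label_rep | exact: label_set_sp_orbit].
rewrite -(orbit_label_rep v1) -(orbit_label_rep v2).
apply: orbit_label_sp_orbit (S4_label_rep v2) _.
by rewrite -label_set_sp_orbit // -E label_set_sp_orbit //; exact: sp_orbit_refl.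
Qed.
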